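(* For every $0<r<1$, the set $\Sigma_r:=\{q\in B:\ d(q,\partial B)=1-r\}$ is a topological sphere.
   Context: The first Heisenberg group $\mathbb{H}^1$ is $\mathbb{R}^3$ with product $(x,y,t)\cdot(x',y',t')=(x+x',y+y',t+t'-2xy'+2yx')$, Korányi norm $\|(z,t)\|=(|z|^4+t^2)^{1/4}$ ($z=x+\mathrm{i}y$), distance $d(p,q)=\|q^{-1}\cdot p\|$, $d(q,A)=\inf_{a\in A}d(q,a)$, and $B=\{q:\|q\|<1\}$ is the Korányi unit ball. *)

(* R : realType, H^1 modelled as R * R * R = ((x,y),t). *)
From HB Require Import structures.
From mathcomp Require Import all_boot all_order all_algebra.
From mathcomp Require Import all_classical all_reals all_analysis.
Set Implicit Arguments. Unset Strict Implicit. Unset Printing Implicit Defensive.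
Import Order.TTheory GRing.Theory Num.Theory.
Import numFieldNormedType.Exports.
Local Open Scope classical_set_scope.
Local Open Scope ring_scope.

Notation hpt R := ((R : realType) * (R : realType) * (R : realType))%type.

Definition hmul (R : realType) (p q : hpt R) : hpt R :=
  (p.1.1 + q.1.1, p.1.2 + q.1.2, p.2 + q.2 - 2 * p.1.1 * q.1.2 + 2 * p.1.2 * q.1.1).

Definition hinv (R : realType) (p : hpt R) : hpt R := (- p.1.1, - p.1.2, - p.2).

Definition kor_norm (R : realType) (p : hpt R) : R :=
  Num.sqrt (Num.sqrt ((p.1.1 ^+ 2 + p.1.2 ^+ 2) ^+ 2 + p.2 ^+ 2)).

Definition kdist (R : realType) (p q : hpt R) : R := kor_norm (hmul (hinv q) p).

Definition kdist_set (R : realType) (q : hpt R) (A : set (hpt R)) : R :=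
  inf [set kdist q a | a in A].

Definition kball (R : realType) : set (hpt R) := [set q | kor_norm q < 1].

(* topological boundary (topology of R^3 = topology of the Koranyi metric) *)
Definition tboundary (R : realType) (A : set (hpt R)) : set (hpt R) :=
  closure A `\` interior A.

Definition Sigma (R : realType) (r : R) : set (hpt R) :=
  [set q | kball q /\ kdist_set q (tboundary (@kball R)) = 1 - r].

Definition sphere2 (R : realType) : set (hpt R) :=
  [set p | p.1.1 ^+ 2 + p.1.2 ^+ 2 + p.2 ^+ 2 = 1].

Definition homeomorphic (R : realType) (A B : set (hpt R)) : Prop :=
  exists (f g : hpt R -> hpt R),
    [/\ (forall a, A a -> B (f a)), (forall b, B b -> A (g b)),
        (forall a, A a -> g (f a) = a) & (forall b, B b -> f (g b) = b)]
    /\ {within A, continuous f} /\ {within B, continuous g}.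

(* The Korányi norm [N] is homogeneous and subadditive:
   [N (p q) <= N p + N q] and [N (δ_s p) = s N p] for the dilations
   [δ_s (x, y, t) = (s x, s y, s^2 t)].  Hence [∂B] is the sphere [N = 1] and
   [f := d(., ∂B)] is 1-Lipschitz, with [f 0 = 1] and [f = 0] on [∂B].
   The heart of the proof is that [f] strictly decreases along every ray
   [s |-> δ_s u], [N u = 1], [0 < s < 1].  With [ρ = f q], the translated ball
   [q . B(0, ρ)] lies in the closed unit ball; testing this against a rotation
   of [w] about the t-axis that makes the triangle inequality for [N^2] sharp
   gives [|z_q| + ρ <= 1], and then a uniform margin [ε > 0] with
   [f (δ_s q) >= ρ + ε].  So [f = 1 - r] has exactly one solution [σ u] on each
   ray, [σ] is continuous by monotonicity, and [Σ_r] is the radial graph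
   [u |-> δ_(σ u) u] over the Korányi sphere; sliding along the dilation
   orbits identifies it with the Euclidean sphere. *)

From HB Require Import structures.
From mathcomp Require Import all_boot all_order all_algebra.
From mathcomp Require Import all_classical all_reals all_analysis.
From mathcomp Require Import ring lra.
Import Order.TTheory GRing.Theory Num.Theory.
Import numFieldNormedType.Exports.
Local Open Scope classical_set_scope.
Local Open Scope ring_scope.
Set Implicit Arguments. Unset Strict Implicit. Unset Printing Implicit Defensive.

Section Hypot.
Variable R : rcfType.
Implicit Types a b c d k u v : R.

Lemma le_of_sqr_le u v : 0 <= v -> u ^+ 2 <= v ^+ 2 -> u <= v.
Proof. by move=> v0 h; nra. Qed.

Lemma sqrtr_sqrM k a : 0 <= k -> Num.sqrt (k ^+ 2 * a) = k * Num.sqrt a.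
Proof. by move=> k0; rewrite sqrtrM ?sqr_ge0 // sqrtr_sqr ger0_norm. Qed.

Definition hypot a b : R := Num.sqrt (a ^+ 2 + b ^+ 2).

Lemma hypot_ge0 a b : 0 <= hypot a b. Proof. exact: sqrtr_ge0. Qed.

Lemma sqr_hypot a b : hypot a b ^+ 2 = a ^+ 2 + b ^+ 2.
Proof. by rewrite sqr_sqrtr //; nra. Qed.

Lemma ler_hypotl a b : a <= hypot a b.
Proof. by apply: le_of_sqr_le; [exact: hypot_ge0 | rewrite sqr_hypot; nra]. Qed.

Lemma normr_le_hypotr a b : `|b| <= hypot a b.
Proof.
apply: le_of_sqr_le; first exact: hypot_ge0.
by rewrite sqr_hypot real_normK ?num_real //; nra.
Qed.

Lemma hypotD a b c d : hypot (a + c) (b + d) <= hypot a b + hypot c d.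
Proof.
have hab := sqr_hypot a b; have hcd := sqr_hypot c d.
have ab0 := hypot_ge0 a b; have cd0 := hypot_ge0 c d.
have cauchy_schwarz : a * c + b * d <= hypot a b * hypot c d.
  apply: le_of_sqr_le; first exact: mulr_ge0.
  by rewrite exprMn hab hcd; have := sqr_ge0 (a * d - b * c); nra.
apply: le_of_sqr_le; first exact: addr_ge0.
by rewrite sqr_hypot; nra.
Qed.

Lemma hypotZ k a b : hypot (k * a) (k * b) = `|k| * hypot a b.
Proof. by rewrite /hypot -sqrtr_sqr -sqrtrM ?sqr_ge0 //; congr Num.sqrt; ring. Qed.

Lemma hypot00 : hypot 0 0 = 0.
Proof. by rewrite /hypot expr0n /= addr0 sqrtr0. Qed.

Lemma hypot_eq0 a b : hypot a b = 0 -> a = 0 /\ b = 0.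
Proof. by move=> h; have := sqr_hypot a b; rewrite h expr0n /= => e; split; nra. Qed.

End Hypot.

Section HeisenbergAlgebra.
Variable R : realType.
Implicit Types (p q w : hpt R) (s : R).
Local Notation N := (@kor_norm R).

Definition hone : hpt R := (0, 0, 0).
Definition hdil s p : hpt R := (s * p.1.1, s * p.1.2, s ^+ 2 * p.2).
Definition zsq p : R := p.1.1 ^+ 2 + p.1.2 ^+ 2.
Definition kor_sqnorm p : R := hypot (zsq p) p.2.
Definition zdot p q : R := p.1.1 * q.1.1 + p.1.2 * q.1.2.
Definition zcross p q : R := p.1.2 * q.1.1 - p.1.1 * q.1.2.

Ltac heis_ring := rewrite /hmul /hinv /hdil /hone /=; f_equal; [f_equal|]; ring.

Lemma hmulA p q w : hmul (hmul p q) w = hmul p (hmul q w).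
Proof. by heis_ring. Qed.

Lemma hinvM p q : hinv (hmul p q) = hmul (hinv q) (hinv p).
Proof. by heis_ring. Qed.

Lemma hmulKVg p q : hmul p (hmul (hinv p) q) = q.
Proof. by case: q => [[? ?] ?]; heis_ring. Qed.

Lemma hmulVg p : hmul (hinv p) p = hone.
Proof. by heis_ring. Qed.

Lemma hmulg1 p : hmul p hone = p.
Proof. by case: p => [[? ?] ?]; heis_ring. Qed.

Lemma hinvK p : hinv (hinv p) = p.
Proof. by case: p => [[? ?] ?]; heis_ring. Qed.

Lemma hdil_comp s s' p : hdil s (hdil s' p) = hdil (s * s') p.
Proof. by heis_ring. Qed.

Lemma hdil1 p : hdil 1 p = p.
Proof. by case: p => [[? ?] ?]; heis_ring. Qed.

Lemma hdil0 p : hdil 0 p = hone.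
Proof. by heis_ring. Qed.

Lemma zsq_ge0 p : 0 <= zsq p. Proof. by rewrite /zsq; nra. Qed.

Lemma zsq_eq0 p : zsq p = 0 -> p.1.1 = 0 /\ p.1.2 = 0.
Proof. by rewrite /zsq => h; split; nra. Qed.

Lemma zsq_hdil s p : zsq (hdil s p) = s ^+ 2 * zsq p.
Proof. by rewrite /zsq /hdil /=; ring. Qed.

Lemma zsqM p q : zsq (hmul p q) = zsq p + zsq q + 2 * zdot p q.
Proof. by rewrite /zsq /zdot /hmul /=; ring. Qed.

Lemma tM p q : (hmul p q).2 = p.2 + q.2 + 2 * zcross p q.
Proof. by rewrite /zcross /hmul /=; ring. Qed.

Lemma hypot_zdot_zcross p q :
  hypot (zdot p q) (zcross p q) = Num.sqrt (zsq p) * Num.sqrt (zsq q).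
Proof.
rewrite /hypot -sqrtrM ?zsq_ge0 //; congr Num.sqrt.
by rewrite /zdot /zcross /zsq; ring.
Qed.

Lemma kor_normE p : N p = Num.sqrt (kor_sqnorm p). Proof. by []. Qed.

Lemma kor_sqnorm_ge0 p : 0 <= kor_sqnorm p. Proof. exact: hypot_ge0. Qed.

Lemma kor_norm_ge0 p : 0 <= N p. Proof. exact: sqrtr_ge0. Qed.

Lemma sqr_kor_norm p : N p ^+ 2 = kor_sqnorm p.
Proof. by rewrite /kor_norm sqr_sqrtr // kor_sqnorm_ge0. Qed.

Lemma sqrt_zsq_le_kor_norm p : Num.sqrt (zsq p) <= N p.
Proof. by rewrite /kor_norm ler_sqrt ?kor_sqnorm_ge0 // ler_hypotl. Qed.

Lemma kor_sqnormM_le p q : kor_sqnorm (hmul p q) <=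
  hypot (zsq p + zsq q) (p.2 + q.2) + 2 * (Num.sqrt (zsq p) * Num.sqrt (zsq q)).
Proof.
rewrite /kor_sqnorm zsqM tM -hypot_zdot_zcross.
by apply: le_trans (hypotD _ _ _ _) _; rewrite hypotZ ger0_norm.
Qed.

Lemma kor_normM_le p q : N (hmul p q) <= N p + N q.
Proof.
apply: le_of_sqr_le; first by apply: addr_ge0; apply: kor_norm_ge0.
rewrite sqr_kor_norm; apply: le_trans (kor_sqnormM_le p q) _.
apply: le_trans (lerD (hypotD _ _ _ _) (lexx _)) _.
have := sqrt_zsq_le_kor_norm p; have := sqrt_zsq_le_kor_norm q.
have := sqrtr_ge0 (zsq p); have := sqrtr_ge0 (zsq q).
rewrite -/(kor_sqnorm p) -/(kor_sqnorm q) -!sqr_kor_norm.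
by have := kor_norm_ge0 p; have := kor_norm_ge0 q; nra.
Qed.

Lemma kor_normV p : N (hinv p) = N p.
Proof. by rewrite /kor_norm /hypot /zsq /hinv /= !sqrrN. Qed.

Lemma kor_sqnorm_hdil s p : kor_sqnorm (hdil s p) = s ^+ 2 * kor_sqnorm p.
Proof. by rewrite /kor_sqnorm zsq_hdil hypotZ ger0_norm ?sqr_ge0. Qed.

Lemma kor_norm_hdil s p : 0 <= s -> N (hdil s p) = s * N p.
Proof. by move=> s0; rewrite !kor_normE kor_sqnorm_hdil sqrtr_sqrM. Qed.

Lemma kor_norm1 : N hone = 0.
Proof.
have zsq1 : zsq hone = 0 by rewrite /zsq /= expr0n addr0.
by rewrite kor_normE /kor_sqnorm zsq1 hypot00 sqrtr0.
Qed.

Lemma kor_norm_eq0 p : N p = 0 -> p = hone.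
Proof.
move=> h; have := sqr_kor_norm p; rewrite h expr0n /= => /esym /hypot_eq0 []; clear h.
by case: p => [[x y] t] /=; rewrite /zsq /= => hz ->; rewrite /hone; do 2!f_equal; nra.
Qed.

Lemma kor_norm_gt0 p : p != hone -> 0 < N p.
Proof.
move=> ph; rewrite lt_def kor_norm_ge0 andbT.
by apply: contraNneq ph => /kor_norm_eq0 ->.
Qed.

End HeisenbergAlgebra.

Arguments hone {R}.

Section Alignment.
Variable R : realType.
Implicit Types (p q w : hpt R).
Local Notation N := (@kor_norm R).

Definition unit_dir (a b : R) : R * R :=
  if hypot a b == 0 then (1, 0) else (a / hypot a b, b / hypot a b).

(* The horizontal part of [w] rotated about the t-axis so that
   [(zdot q w, zcross q w)] becomes a nonnegative multiple of
   [(zsq q + zsq w, q.2 + w.2)]: then the estimate [kor_sqnormM_le] is an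
   equality. *)
Definition align q w : hpt R :=
  if zsq q == 0 then w else
  let e := unit_dir (zsq q + zsq w) (q.2 + w.2) in
  let k := Num.sqrt (zsq w) / Num.sqrt (zsq q) in
  (k * (e.1 * q.1.1 + e.2 * q.1.2), k * (e.1 * q.1.2 - e.2 * q.1.1), w.2).

Lemma unit_dir_sqr (a b : R) : (unit_dir a b).1 ^+ 2 + (unit_dir a b).2 ^+ 2 = 1.
Proof.
rewrite /unit_dir; case: eqP => [_|/eqP h] /=; first by rewrite expr1n expr0n /= addr0.
by rewrite !expr_div_n -mulrDl -sqr_hypot divff // expf_neq0.
Qed.

Lemma zsq_align q w : zsq (align q w) = zsq w.
Proof.
rewrite /align; case: eqP => // /eqP hq /=.
have e := unit_dir_sqr (zsq q + zsq w) (q.2 + w.2).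
set e1 := (unit_dir _ _).1 in e *; set e2 := (unit_dir _ _).2 in e *.
set k := Num.sqrt (zsq w) / Num.sqrt (zsq q).
have -> : zsq (k * (e1 * q.1.1 + e2 * q.1.2), k * (e1 * q.1.2 - e2 * q.1.1), w.2)
  = k ^+ 2 * ((e1 ^+ 2 + e2 ^+ 2) * zsq q) by rewrite /zsq /=; ring.
by rewrite e mul1r expr_div_n !sqr_sqrtr ?zsq_ge0 // mulfVK.
Qed.

Lemma align_t q w : (align q w).2 = w.2.
Proof. by rewrite /align; case: eqP. Qed.

Lemma kor_norm_align q w : N (align q w) = N w.
Proof. by rewrite !kor_normE /kor_sqnorm zsq_align align_t. Qed.

Lemma kor_sqnormM_align q w : kor_sqnorm (hmul q (align q w)) =
  hypot (zsq q + zsq w) (q.2 + w.2) + 2 * (Num.sqrt (zsq q) * Num.sqrt (zsq w)).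
Proof.
rewrite /kor_sqnorm zsqM tM zsq_align align_t.
have [hq|hq] := eqVneq (zsq q) 0.
  have [x0 y0] := zsq_eq0 hq.
  by rewrite /align hq eqxx /zdot /zcross x0 y0 sqrtr0 !(mul0r, mulr0, subr0, addr0).
set S := Num.sqrt (zsq q) * Num.sqrt (zsq w).
set e := unit_dir (zsq q + zsq w) (q.2 + w.2).
have [-> ->] : zdot q (align q w) = S * e.1 /\ zcross q (align q w) = S * e.2.
  have sq0 : Num.sqrt (zsq q) != 0 by rewrite sqrtr_eq0 -ltNge lt_def hq zsq_ge0.
  have kS : Num.sqrt (zsq w) / Num.sqrt (zsq q) * zsq q = S.
    move: sq0 (sqr_sqrtr (zsq_ge0 q)); rewrite /S.
    by set a := Num.sqrt (zsq q) => sq0 <-; field.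
  by rewrite /align (negPf hq) /zdot /zcross /= -kS /zsq; split; ring.
have S0 : 0 <= S by apply: mulr_ge0; apply: sqrtr_ge0.
rewrite /e /unit_dir; case: eqP => [/[dup] h /hypot_eq0 [-> ->]|/eqP h] /=.
  by rewrite hypot00 !add0r mulr1 !mulr0 /hypot expr0n /= addr0 sqrtr_sqr ger0_norm // mulr_ge0.
set n := hypot _ _ in h *.
have n0 : 0 < n by rewrite lt_def h hypot_ge0.
have scale (a : R) : a + 2 * (S * (a / n)) = (1 + 2 * S / n) * a by field.
rewrite !scale hypotZ ger0_norm; last by rewrite addr_ge0 // divr_ge0 ?mulr_ge0 // ltW.
by rewrite -/n; field.
Qed.

End Alignment.

Section Topology.
Variable R : realType.
Implicit Types (p q : hpt R).
Local Notation N := (@kor_norm R).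

Section FilterLimits.
Context {T : Type} (F : set_system T) {FF : Filter F}.

Lemma cvg_sqr (f : T -> R) (a : R) : f @ F --> a -> (fun x => f x ^+ 2) @ F --> a ^+ 2.
Proof. by move=> fa; rewrite expr2; under eq_fun do rewrite expr2; exact: cvgM. Qed.

Lemma cvg_sqrt (f : T -> R) (a : R) : f @ F --> a -> (fun x => Num.sqrt (f x)) @ F --> Num.sqrt a.
Proof. by move=> fa; apply: continuous_cvg => //; exact: sqrt_continuous. Qed.

Lemma cvg_coord (g : T -> hpt R) p : g @ F --> p ->
  [/\ (fun x => (g x).1.1) @ F --> p.1.1, (fun x => (g x).1.2) @ F --> p.1.2
    & (fun x => (g x).2) @ F --> p.2].
Proof.
move=> gp.
have x_cont : continuous (fun p : hpt R => p.1.1).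
  by move=> ?; apply: cvg_comp; exact: cvg_fst.
have y_cont : continuous (fun p : hpt R => p.1.2).
  by move=> ?; apply: cvg_comp; [exact: cvg_fst | exact: cvg_snd].
have t_cont : continuous (fun p : hpt R => p.2) by move=> ?; exact: cvg_snd.
by split; [exact: cvg_comp gp (x_cont p) | exact: cvg_comp gp (y_cont p)
  | exact: cvg_comp gp (t_cont p)].
Qed.

Lemma cvg_hdil (g : T -> R) (h : T -> hpt R) s p :
  g @ F --> s -> h @ F --> p -> (fun x => hdil (g x) (h x)) @ F --> hdil s p.
Proof.
move=> gs /cvg_coord [h11 h12 h2].
apply: (@cvg_pair _ _ _ _ (nbhs (s * p.1.1, s * p.1.2)) (nbhs (s ^+ 2 * p.2))).
  by apply: (@cvg_pair _ _ _ _ (nbhs (s * p.1.1)) (nbhs (s * p.1.2))); apply: cvgM.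
by apply: cvgM => //; exact: cvg_sqr.
Qed.

Lemma cvg_hmul (g h : T -> hpt R) p q :
  g @ F --> p -> h @ F --> q -> (fun x => hmul (g x) (h x)) @ F --> hmul p q.
Proof.
move=> /cvg_coord [g11 g12 g2] /cvg_coord [h11 h12 h2].
apply: (@cvg_pair _ _ _ _ (nbhs (p.1.1 + q.1.1, p.1.2 + q.1.2))
  (nbhs (p.2 + q.2 - 2 * p.1.1 * q.1.2 + 2 * p.1.2 * q.1.1))).
  by apply: (@cvg_pair _ _ _ _ (nbhs (p.1.1 + q.1.1)) (nbhs (p.1.2 + q.1.2))); apply: cvgD.
by apply: cvgD; [apply: cvgB; [exact: cvgD|]|];
  apply: cvgM => //; apply: cvgM => //; exact: cvg_cst.
Qed.

End FilterLimits.

Lemma zsq_continuous : continuous (@zsq R).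
Proof.
move=> p; have [? ? _] := cvg_coord (F := nbhs p) (g := id) (p := p) cvg_id.
by apply: cvgD; apply: cvg_sqr.
Qed.

Lemma kor_norm_continuous : continuous N.
Proof.
move=> p; have [_ _ ?] := cvg_coord (F := nbhs p) (g := id) (p := p) cvg_id.
by do 2!apply: cvg_sqrt; apply: cvgD; apply: cvg_sqr => //; exact: zsq_continuous.
Qed.

Lemma hdil_continuous p : continuous (fun s : R => hdil s p).
Proof. by move=> s; exact: (cvg_hdil (F := nbhs s) (g := id) cvg_id (cvg_cst p)). Qed.

Lemma kball_open : open (@kball R).
Proof.
have -> : @kball R = N @^-1` [set x | x < 1] by [].
by apply: open_comp; [move=> p _; exact: kor_norm_continuous | exact: open_lt].
Qed.

Lemma tboundary_kball : tboundary (@kball R) = [set q | N q = 1].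
Proof.
rewrite /tboundary (proj1 (interior_id _) kball_open).
have cl : closed [set q : hpt R | N q <= 1].
  have -> : [set q : hpt R | N q <= 1] = N @^-1` [set x | x <= 1] by [].
  by apply: preimage_closed; [move=> p _; exact: kor_norm_continuous | exact: closed_le].
apply/seteqP; split => q /=.
  move=> [qc qn]; rewrite /kball /= in qn.
  have : [set q : hpt R | N q <= 1] q.
    by move: cl => /closure_id ->; apply: closureS qc => x /=; exact: ltW.
  by rewrite /= le_eqVlt => /orP [/eqP //|/qn].
move=> Nq; split; last by rewrite /kball /= Nq ltxx.
have dil_to_q : (fun s : R => hdil s q) @ (1 : R) --> q.
  by rewrite -[X in _ --> X]hdil1; exact: hdil_continuous.
move=> U /dil_to_q /nbhs_ballP [e e0 he].
set s := 1 - Num.min e 1 / 2.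
have m0 : 0 < Num.min e 1 by rewrite lt_min e0 ltr01.
have m1 : Num.min e 1 <= 1 by rewrite ge_min lexx orbT.
have me : Num.min e 1 <= e by rewrite ge_min lexx.
exists (hdil s q); split; first by rewrite /kball /= kor_norm_hdil ?Nq ?mulr1 /s; lra.
by apply: he; rewrite -ball_normE /ball_ /= /s opprB addrC subrK ger0_norm; lra.
Qed.

End Topology.

Section RayEstimate.
Variable R : realFieldType.
Implicit Types s A c l m rho Y : R.

(* For [A = |z_q|] and [m = N w] with [N (δ_s q . w) = 1], comparing
   [δ_s q . w] with [q . δ_l w] bounds [1] by [ray_est s A l m] whenever
   [l m <= d(q, ∂B)] (lemma [ray_est_ge1]). *)
Definition ray_est s A l m : R :=
  s ^+ 2 + (1 - s ^+ 2 * l ^+ 2) * m ^+ 2 + 2 * A * m * (s - s ^+ 2 * l).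

Lemma ray_est1_lt1 s A rho : 0 <= s -> s < 1 -> 0 <= A -> 0 <= rho -> rho < 1 ->
  A + rho <= 1 -> ray_est s A 1 rho < 1.
Proof.
move=> s0 s1 A0 r0 r1 Ar; rewrite /ray_est.
have h1 : 0 < (1 - s) * (1 - rho) by apply: mulr_gt0; lra.
have h2 : A * rho <= (1 - rho) * rho by apply: ler_wpM2r => //; lra.
have h3 : s * (1 - s) * (A * rho) <= s * (1 - s) * ((1 - rho) * rho).
  by apply: ler_wpM2l => //; apply: mulr_ge0; lra.
have h4 : 0 <= (1 - s) * (1 - rho) * (s + rho * (1 - s)).
  by apply: mulr_ge0; [apply: mulr_ge0; lra | apply: addr_ge0 => //; apply: mulr_ge0; lra].
by nra.
Qed.

Lemma ray_est_ge1_of_bounds s A c m Y l : 0 <= s -> s <= 1 -> 0 <= A -> 0 <= c ->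
  c <= m -> 0 <= l -> l <= 1 ->
  1 <= s ^+ 2 * Y + (1 - s ^+ 2 * l ^+ 2) * m ^+ 2 + 2 * s * A * c ->
  Y + 2 * l * A * c <= 1 -> 1 <= ray_est s A l m.
Proof.
move=> s0 s1 A0 c0 cm l0 l1 H1 H2; rewrite /ray_est.
have e1 : s ^+ 2 * Y <= s ^+ 2 * (1 - 2 * l * A * c).
  by apply: ler_wpM2l; [exact: sqr_ge0 | lra].
have sl : s * l <= 1 by apply: mulr_ile1.
have e2 : 0 <= s - s ^+ 2 * l by nra.
have e3 : 2 * A * c * (s - s ^+ 2 * l) <= 2 * A * m * (s - s ^+ 2 * l).
  by apply: ler_wpM2r => //; apply: ler_wpM2l => //; lra.
by nra.
Qed.

(* With [l = 1] when [m <= rho] and [l = rho / m] otherwise; the margin is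
   positive by [ray_est1_lt1]. *)
Lemma ray_est_margin s A rho m : 0 <= s -> s < 1 -> 0 <= A -> 0 <= rho -> rho < 1 ->
  A + rho <= 1 -> 0 <= m ->
  (forall l, 0 <= l -> l <= 1 -> l * m <= rho -> 1 <= ray_est s A l m) ->
  rho + (1 - ray_est s A 1 rho) / 5 <= m.
Proof.
move=> s0 s1 A0 r0 r1 Ar m0 H.
have E1 := ray_est1_lt1 s0 s1 A0 r0 r1 Ar.
have s2 : s ^+ 2 <= s by rewrite expr2 ler_piMr // ltW.
have E0 : 0 <= ray_est s A 1 rho.
  have : 0 <= (1 - s ^+ 2) * rho ^+ 2 by apply: mulr_ge0; [lra | exact: sqr_ge0].
  have : 0 <= A * rho * (s - s ^+ 2) by apply: mulr_ge0; [exact: mulr_ge0 | lra].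
  by rewrite /ray_est; nra.
have [mr|rm] := lerP m rho.
  have := H 1 ler01 (lexx _); rewrite mul1r => /(_ mr).
  have e1 : (1 - s ^+ 2) * m ^+ 2 <= (1 - s ^+ 2) * rho ^+ 2.
    by apply: ler_wpM2l; [lra | rewrite ler_sqr ?nnegrE].
  have e2 : A * m * (s - s ^+ 2) <= A * rho * (s - s ^+ 2).
    by apply: ler_wpM2r; [lra | apply: ler_wpM2l].
  by move: E1; rewrite /ray_est expr1n !mulr1; nra.
have mn0 : m != 0 by rewrite gt_eqF // (le_lt_trans r0 rm).
have := H (rho / m) (divr_ge0 r0 m0).
rewrite ler_pdivrMr ?mul1r ?(ltW rm) ?(le_lt_trans r0 rm) // divfK // => /(_ isT (lexx _)).
have -> : ray_est s A (rho / m) m =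
    ray_est s A 1 rho + (m - rho) * (m + rho + 2 * s * A) by rewrite /ray_est; field.
move=> H1; rewrite leNgt; apply/negP => hm.
have hb : m + rho + 2 * s * A <= 5 by nra.
have : (m - rho) * (m + rho + 2 * s * A) <= (m - rho) * 5 by rewrite ler_wpM2l //; lra.
by lra.
Qed.

End RayEstimate.

Section BoundaryDistance.
Variable R : realType.
Implicit Types (p q v w a : hpt R) (s l : R).
Local Notation N := (@kor_norm R).

Lemma kor_norm_e1 : N (1, 0, 0) = 1.
Proof.
by rewrite kor_normE /kor_sqnorm /hypot /zsq /= expr1n !expr0n /= !addr0 !expr1n !sqrtr1.
Qed.

Definition bdist q : R := kdist_set q (tboundary (@kball R)).

Let bdist_set q := [set N (hmul (hinv a) q) | a in [set a | N a = 1]].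

Lemma bdistE q : bdist q = inf (bdist_set q).
Proof. by rewrite /bdist /kdist_set tboundary_kball. Qed.

Lemma bdist_le q a : N a = 1 -> bdist q <= N (hmul (hinv a) q).
Proof.
move=> Na; rewrite bdistE; apply: ge_inf; last by exists a.
by exists 0 => _ [b _ <-]; exact: kor_norm_ge0.
Qed.

Lemma bdist_ge q m : (forall a, N a = 1 -> m <= N (hmul (hinv a) q)) -> m <= bdist q.
Proof.
move=> H; rewrite bdistE; apply: lb_le_inf; last by move=> _ [a Na <-]; exact: H.
by exists (N (hmul (hinv (1, 0, 0)) q)), (1, 0, 0); first exact: kor_norm_e1.
Qed.

Lemma bdist_ge0 q : 0 <= bdist q.
Proof. by apply: bdist_ge => a _; exact: kor_norm_ge0. Qed.

Lemma bdist_lipschitz q q' : bdist q <= bdist q' + N (hmul (hinv q') q).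
Proof.
rewrite -lerBlDr; apply: bdist_ge => a Na; rewrite lerBlDr.
apply: le_trans (bdist_le q Na) _.
by rewrite -{1}(hmulKVg q' q) -hmulA; exact: kor_normM_le.
Qed.

Lemma cvg_bdist {T : Type} (F : set_system T) {FF : Filter F} (h : T -> hpt R) q :
  h @ F --> q -> (fun x => bdist (h x)) @ F --> bdist q.
Proof.
move=> hq.
have dist0 : (fun x => N (hmul (hinv q) (h x))) @ F --> 0.
  rewrite -kor_norm1 -(hmulVg q).
  exact: cvg_comp _ _ (cvg_hmul (cvg_cst (hinv q)) hq) (@kor_norm_continuous R _).
apply: (@squeeze_cvgr _ _ _ _ (fun x => bdist q - N (hmul (hinv q) (h x)))
  (fun x => bdist q + N (hmul (hinv q) (h x)))).
- near=> x; apply/andP; split; last exact: bdist_lipschitz.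
  by rewrite lerBlDr -kor_normV hinvM hinvK; exact: bdist_lipschitz.
- by rewrite -[X in _ --> X]subr0; apply: cvgB => //; exact: cvg_cst.
- by rewrite -[X in _ --> X]addr0; apply: cvgD => //; exact: cvg_cst.
Unshelve. all: by end_near.
Qed.

Lemma bdist1 : bdist hone = 1.
Proof.
apply/eqP; rewrite eq_le; apply/andP; split; last first.
  by apply: bdist_ge => a Na; rewrite hmulg1 kor_normV Na.
by apply: le_trans (bdist_le hone kor_norm_e1) _; rewrite hmulg1 kor_normV kor_norm_e1.
Qed.

Lemma bdist_sphere q : N q = 1 -> bdist q = 0.
Proof.
move=> Nq; apply/eqP; rewrite eq_le bdist_ge0 andbT.
by apply: le_trans (bdist_le q Nq) _; rewrite hmulVg kor_norm1.
Qed.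

(* Otherwise the path [l |-> q (δ_l v)] would meet the unit sphere at some
   [l < 1], a point at distance [l * N v < bdist q] from [q]. *)
Lemma kor_normM_le1 q v : N q < 1 -> N v <= bdist q -> N (hmul q v) <= 1.
Proof.
move=> Nq Nvq; rewrite leNgt; apply/negP => Nqv.
set phi := fun l : R => N (hmul q (hdil l v)).
have phi_cont : continuous phi.
  move=> l; exact: (cvg_comp _ _ (cvg_hmul (cvg_cst q) (@hdil_continuous R v l))
    (@kor_norm_continuous R _)).
have phi0 : phi 0 = N q by rewrite /phi hdil0 hmulg1.
have phi1 : phi 1 = N (hmul q v) by rewrite /phi hdil1.
have [l] : exists2 l, l \in `[0, 1] & phi l = 1.
  apply: IVT; [exact: ler01 | exact: continuous_subspaceT |].
  by rewrite phi0 phi1 ge_min le_max (ltW Nq) (ltW Nqv) orbT.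
rewrite in_itv /= => /andP [l0 l1] phil.
have lt1 : l < 1.
  rewrite lt_neqAle l1 andbT; apply: contraTneq Nqv => l1E.
  by move: phil; rewrite l1E phi1 => ->; rewrite ltxx.
have := bdist_le q phil; rewrite hinvM hmulA hmulVg hmulg1 kor_normV kor_norm_hdil // => lNv.
have Nv0 : N v = 0 by have := kor_norm_ge0 v; nra.
move: Nqv; apply/negP; rewrite -leNgt.
by apply: le_trans (kor_normM_le _ _) _; rewrite Nv0 addr0 ltW.
Qed.

Lemma kor_sqnormM_align_le1 q w : N q < 1 -> N w <= bdist q ->
  hypot (zsq q + zsq w) (q.2 + w.2) + 2 * (Num.sqrt (zsq q) * Num.sqrt (zsq w)) <= 1.
Proof.
move=> Nq Nw; rewrite -kor_sqnormM_align -sqr_kor_norm.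
have := kor_normM_le1 Nq (_ : N (align q w) <= bdist q); rewrite kor_norm_align => /(_ Nw).
by have := kor_norm_ge0 (hmul q (align q w)); nra.
Qed.

End BoundaryDistance.

Section Monotonicity.
Variable R : realType.
Implicit Types (p q v w a : hpt R) (s l : R).
Local Notation N := (@kor_norm R).

Lemma sqrt_zsq_add_bdist_le1 q : N q < 1 -> Num.sqrt (zsq q) + bdist q <= 1.
Proof.
move=> Nq; have r0 := bdist_ge0 q.
have := @kor_sqnormM_align_le1 R q (hdil (bdist q) (1, 0, 0)) Nq.
rewrite kor_norm_hdil // kor_norm_e1 mulr1 => /(_ (lexx _)).
rewrite zsq_hdil /zsq /= expr1n expr0n /= addr0 mulr1 sqrtr_sqr ger0_norm //.
have := ler_hypotl (q.1.1 ^+ 2 + q.1.2 ^+ 2 + bdist q ^+ 2) (q.2 + bdist q ^+ 2 * 0).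
move=> h1 h2; apply: le_of_sqr_le => //; rewrite expr1n.
by have := sqr_sqrtr (zsq_ge0 q); rewrite /zsq; nra.
Qed.

Lemma normt_add_sqr_bdist_le1 q : N q < 1 -> `|q.2| + bdist q ^+ 2 <= 1.
Proof.
move=> Nq; have r0 := bdist_ge0 q.
set sgn : R := if 0 <= q.2 then 1 else -1.
have e3_vertical : zsq (0, 0, sgn) = 0 by rewrite /zsq /= expr0n /= addr0.
have N_e3 : N (0, 0, sgn) = 1.
  rewrite kor_normE /kor_sqnorm e3_vertical /hypot /sgn /=.
  by case: ifP => _; rewrite ?sqrrN expr1n expr0n /= add0r !sqrtr1.
have := @kor_sqnormM_align_le1 R q (hdil (bdist q) (0, 0, sgn)) Nq.
rewrite kor_norm_hdil // N_e3 mulr1 => /(_ (lexx _)).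
rewrite zsq_hdil e3_vertical mulr0 sqrtr0 !mulr0 !addr0.
have := normr_le_hypotr (zsq q) (q.2 + (hdil (bdist q) (0, 0, sgn)).2).
rewrite /hdil /sgn /=; case: ifP => [q0|/negbT].
  by rewrite mulr1 !ger0_norm ?addr_ge0 ?sqr_ge0; lra.
rewrite -ltNge => q0; rewrite mulrN1 (ltr0_norm q0) ler0_norm; first lra.
by have := sqr_ge0 (bdist q); lra.
Qed.

Lemma bdist_lt1 q : N q < 1 -> q != hone -> bdist q < 1.
Proof.
move=> Nq; rewrite ltNge; apply: contra => r1; have r0 := bdist_ge0 q.
have := sqrt_zsq_add_bdist_le1 Nq; have := normt_add_sqr_bdist_le1 Nq.
have := normr_ge0 q.2; have := sqrtr_ge0 (zsq q); move=> A0 t0 ht hA.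
have [x0 y0] : q.1.1 = 0 /\ q.1.2 = 0.
  apply: zsq_eq0; rewrite -(sqr_sqrtr (zsq_ge0 q)).
  by rewrite (_ : Num.sqrt (zsq q) = 0) ?expr0n //; nra.
have t0' : q.2 = 0 by apply/normr0_eq0; nra.
by case: q {Nq ht hA A0 t0 r0 r1} x0 y0 t0' => [[? ?] ?] /= -> -> ->.
Qed.

Lemma ray_est_ge1 q s w l : N q < 1 -> 0 <= s -> s < 1 -> N (hmul (hdil s q) w) = 1 ->
  0 <= l -> l <= 1 -> l * N w <= bdist q -> 1 <= ray_est s (Num.sqrt (zsq q)) l (N w).
Proof.
move=> Nq s0 s1 Na l0 l1 lw.
set A := Num.sqrt (zsq q); set c := Num.sqrt (zsq w); set m := N w.
have hw : hypot (zsq w) w.2 = m ^+ 2 by rewrite sqr_kor_norm.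
set Y := hypot (zsq q + l ^+ 2 * zsq w) (q.2 + l ^+ 2 * w.2).
apply: (@ray_est_ge1_of_bounds _ s A c m Y l) => //.
- exact: ltW.
- exact: sqrtr_ge0.
- exact: sqrtr_ge0.
- exact: sqrt_zsq_le_kor_norm.
- have sl : s * l <= 1 by apply: mulr_ile1 => //; exact: ltW.
  have k0 : 0 <= 1 - s ^+ 2 * l ^+ 2 by rewrite subr_ge0 -exprMn expr_le1 // mulr_ge0.
  have unit_sq : kor_sqnorm (hmul (hdil s q) w) = 1 by rewrite -sqr_kor_norm Na expr1n.
  rewrite -[X in X <= _]unit_sq; apply: le_trans (kor_sqnormM_le _ _) _.
  rewrite zsq_hdil sqrtr_sqrM // -/A -/c (_ : 2 * (s * A * c) = 2 * s * A * c) ?lerD2r;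
    last by ring.
  have -> : s ^+ 2 * zsq q + zsq w = s ^+ 2 * (zsq q + l ^+ 2 * zsq w) +
    (1 - s ^+ 2 * l ^+ 2) * zsq w by ring.
  have -> : (hdil s q).2 + w.2 = s ^+ 2 * (q.2 + l ^+ 2 * w.2) +
    (1 - s ^+ 2 * l ^+ 2) * w.2 by rewrite /hdil /=; ring.
  apply: le_trans (hypotD _ _ _ _) _.
  by rewrite !hypotZ hw !ger0_norm ?sqr_ge0.
- have := @kor_sqnormM_align_le1 R q (hdil l w) Nq.
  rewrite kor_norm_hdil // => /(_ lw).
  rewrite zsq_hdil sqrtr_sqrM // /hdil /= -/A -/c -/Y.
  by rewrite (_ : 2 * (A * (l * c)) = 2 * l * A * c) //; ring.
Qed.

Lemma bdist_hdil_gt q s : N q < 1 -> q != hone -> 0 <= s -> s < 1 ->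
  bdist q < bdist (hdil s q).
Proof.
move=> Nq q1 s0 s1; set rho := bdist q; set A := Num.sqrt (zsq q).
have r0 : 0 <= rho := bdist_ge0 q.
have A0 : 0 <= A := sqrtr_ge0 _.
have r1 : rho < 1 := bdist_lt1 Nq q1.
have Ar : A + rho <= 1 := sqrt_zsq_add_bdist_le1 Nq.
have := ray_est1_lt1 s0 s1 A0 r0 r1 Ar.
suff : rho + (1 - ray_est s A 1 rho) / 5 <= bdist (hdil s q) by lra.
apply: bdist_ge => a Na.
set w := hmul (hinv (hdil s q)) a.
rewrite -kor_normV hinvM hinvK -/w.
apply: ray_est_margin => // [|l l0 l1 lw]; first exact: kor_norm_ge0.
by apply: ray_est_ge1 => //; rewrite /w hmulKVg.
Qed.

End Monotonicity.

Section MonotoneRoot.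
Variables (R : realType) (T : topologicalType) (f : T -> R -> R) (sg : T -> R).
Variables (c : R) (w0 : T).
Hypothesis f_decr : \forall w \near w0,
  forall s1 s2, 0 < s1 -> s1 < s2 -> s2 < 1 -> f w s2 < f w s1.
Hypothesis f_cont : forall s, 0 < s -> s < 1 -> {for w0, continuous (fun w => f w s)}.
Hypothesis sg_root : \forall w \near w0, 0 < sg w < 1 /\ f w (sg w) = c.

Lemma monotone_root_continuous : {for w0, continuous sg}.
Proof.
have [/andP [s0 s1] fs0] := nbhs_singleton sg_root.
have decr0 := nbhs_singleton f_decr.
apply/cvgrPdist_lt => e e0.
set d := Num.min (e / 2) (Num.min (sg w0 / 2) ((1 - sg w0) / 2)).
have d0 : 0 < d by rewrite !lt_min; apply/and3P; split; lra.
have de : d <= e / 2 by rewrite ge_min lexx.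
have ds : d <= sg w0 / 2 by rewrite ge_min; apply/orP; right; rewrite ge_min lexx.
have ds' : d <= (1 - sg w0) / 2 by rewrite ge_min; apply/orP; right; rewrite ge_min lexx orbT.
set a := sg w0 - d; set b := sg w0 + d.
have a0 : 0 < a by rewrite /a; lra.
have b1 : b < 1 by rewrite /b; lra.
have fa : c < f w0 a by rewrite -fs0; apply: decr0 => //; rewrite /a; lra.
have fb : f w0 b < c by rewrite -fs0; apply: decr0 => //; rewrite /b; lra.
have ab : a < b by rewrite /a /b; lra.
have near_a : \forall w \near w0, c < f w a.
  by move: (f_cont a0 (lt_trans ab b1)) => /cvgr_gt /(_ _ fa).
have near_b : \forall w \near w0, f w b < c.
  by move: (f_cont (lt_trans a0 ab) b1) => /cvgr_lt /(_ _ fb).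
near=> w.
have [/andP [sw0 sw1] fsw] : 0 < sg w < 1 /\ f w (sg w) = c by near: w.
have decr : forall s1 s2, 0 < s1 -> s1 < s2 -> s2 < 1 -> f w s2 < f w s1 by near: w.
have ha : c < f w a by near: w; exact: near_a.
have hb : f w b < c by near: w; exact: near_b.
have asw : a < sg w.
  rewrite ltNge le_eqVlt; apply/negP => /orP [/eqP swa|swa].
    by move: ha; rewrite -swa fsw ltxx.
  by have := decr _ _ sw0 swa (lt_trans ab b1); rewrite fsw; lra.
have swb : sg w < b.
  rewrite ltNge le_eqVlt; apply/negP => /orP [/eqP bsw|bsw].
    by move: hb; rewrite bsw fsw ltxx.
  by have := decr _ _ (lt_trans a0 ab) bsw sw1; rewrite fsw; lra.
by rewrite ltr_norml; apply/andP; split; rewrite /a /b in asw swb; lra.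
Unshelve. all: by end_near.
Qed.

End MonotoneRoot.

Section Rays.
Variable R : realType.
Implicit Types (q u w : hpt R) (l s : R).
Local Notation N := (@kor_norm R).

Lemma bdist_ray_decreasing u s1 s2 : N u = 1 -> 0 < s1 -> s1 < s2 -> s2 < 1 ->
  bdist (hdil s2 u) < bdist (hdil s1 u).
Proof.
move=> Nu s10 s12 s21; have s20 := lt_trans s10 s12.
have Ns2 : N (hdil s2 u) = s2 by rewrite kor_norm_hdil ?Nu ?mulr1 // ltW.
rewrite (_ : hdil s1 u = hdil (s1 / s2) (hdil s2 u)); last by rewrite hdil_comp mulfVK // gt_eqF.
apply: bdist_hdil_gt; first by rewrite Ns2.
- by apply/eqP => e; move: s20; rewrite -Ns2 e kor_norm1 ltxx.
- by rewrite divr_ge0 // ltW.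
- by rewrite ltr_pdivrMr // mul1r.
Qed.

Lemma bdist_ray_continuous u : continuous (fun s => bdist (hdil s u)).
Proof. by move=> s; apply: cvg_bdist; exact: hdil_continuous. Qed.

Section Radius.
Variable r : R.

Lemma exists_bdist_ray u : 0 < r -> r < 1 -> N u = 1 ->
  exists s, 0 < s < 1 /\ bdist (hdil s u) = 1 - r.
Proof.
move=> r0 r1 Nu.
have f0 : bdist (hdil 0 u) = 1 by rewrite hdil0 bdist1.
have f1 : bdist (hdil 1 u) = 0 by rewrite hdil1 bdist_sphere.
have [s] : exists2 s, s \in `[0, 1] & bdist (hdil s u) = 1 - r.
  apply: IVT; [exact: ler01 | apply: continuous_subspaceT; exact: bdist_ray_continuous |].
  rewrite f0 f1 (min_idPr ler01) (max_idPl ler01).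
  by apply/andP; split; lra.
rewrite in_itv /= => /andP [s0 s1] fs; exists s; split => //.
apply/andP; split; rewrite lt_neqAle ?s0 ?s1 andbT.
  by apply/eqP => s0E; move: fs; rewrite -s0E f0; lra.
by apply/eqP => s1E; move: fs; rewrite s1E f1; lra.
Qed.

Definition sigma_radius u : R :=
  xget 0 [set s | 0 < s < 1 /\ bdist (hdil s u) = 1 - r].

Lemma sigma_radiusP u : 0 < r -> r < 1 -> N u = 1 ->
  0 < sigma_radius u < 1 /\ bdist (hdil (sigma_radius u) u) = 1 - r.
Proof. by move=> r0 r1 Nu; exact: xgetPex (exists_bdist_ray r0 r1 Nu). Qed.

Lemma sigma_radius_eq u s : N u = 1 -> 0 < s < 1 -> bdist (hdil s u) = 1 - r ->
  sigma_radius u = s.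
Proof.
move=> Nu s01 fs; apply: xget_unique => [//|s' [/andP [s'0 s'1] fs']].
have /andP [s0 s1] := s01.
case: (ltgtP s' s) => // [s's|ss'].
  by have := bdist_ray_decreasing Nu s'0 s's s1; rewrite fs fs' ltxx.
by have := bdist_ray_decreasing Nu s0 ss' s'1; rewrite fs fs' ltxx.
Qed.

End Radius.

End Rays.

Section SphereMaps.
Variable R : realType.
Implicit Types (q u w : hpt R) (l : R).
Local Notation N := (@kor_norm R).

Definition kor_normalize w : hpt R := hdil (N w)^-1 w.

Lemma kor_norm_normalize w : w != hone -> N (kor_normalize w) = 1.
Proof.
move=> w1; have Nw := kor_norm_gt0 w1.
by rewrite kor_norm_hdil ?invr_ge0 ?ltW // mulVf // gt_eqF.
Qed.

Lemma hdil_kor_normalize w : w != hone -> hdil (N w) (kor_normalize w) = w.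
Proof. by move=> w1; rewrite hdil_comp mulfV ?hdil1 // gt_eqF // kor_norm_gt0. Qed.

Lemma kor_normalize_hdil l w : 0 < l -> kor_normalize (hdil l w) = kor_normalize w.
Proof.
move=> l0; rewrite /kor_normalize hdil_comp kor_norm_hdil ?ltW //.
by rewrite invfM mulrAC mulVf ?mul1r // gt_eqF.
Qed.

Lemma kor_normalize_continuous w : w != hone -> {for w, continuous kor_normalize}.
Proof.
move=> w1; apply: cvg_hdil; last exact: cvg_id.
by apply: cvgV; [rewrite gt_eqF // kor_norm_gt0 | exact: kor_norm_continuous].
Qed.

Lemma near_neq_hone w : w != hone -> \forall w' \near w, w' != hone.
Proof.
move=> w1; move: (@kor_norm_continuous R w) => /cvgr_gt /(_ _ (kor_norm_gt0 w1)).
apply: filterS => w' Nw'; apply/eqP => w'1.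
by move: Nw'; rewrite w'1 kor_norm1 ltxx.
Qed.

Definition sigma_lift (r : R) w : hpt R :=
  hdil (sigma_radius r (kor_normalize w)) (kor_normalize w).

Lemma sigma_lift_continuous (r : R) w : 0 < r -> r < 1 -> w != hone ->
  {for w, continuous (sigma_lift r)}.
Proof.
move=> r0 r1 w1.
have radius_cont : {for w, continuous (fun w => sigma_radius r (kor_normalize w))}.
  apply: (@monotone_root_continuous _ _ (fun w s => bdist (hdil s (kor_normalize w))) _ (1 - r)).
  - apply: filterS (near_neq_hone w1) => w' w'1 s1 s2.
    exact: bdist_ray_decreasing (kor_norm_normalize w'1).
  - move=> s _ _; apply: cvg_bdist; apply: cvg_hdil; first exact: cvg_cst.
    exact: kor_normalize_continuous.
  - apply: filterS (near_neq_hone w1) => w' w'1.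
    exact: sigma_radiusP r0 r1 (kor_norm_normalize w'1).
exact: (cvg_hdil (F := nbhs w) radius_cont (kor_normalize_continuous w1)).
Qed.

(* The unique [k > 0] such that [hdil k q] lies on the Euclidean unit sphere,
   i.e. [k^2 |z|^2 + k^4 t^2 = 1]. *)
Let disc q := Num.sqrt (zsq q ^+ 2 + 4 * q.2 ^+ 2).

Definition sphere_scale q : R := Num.sqrt (2 / (zsq q + disc q)).

Definition sphere_proj q : hpt R := hdil (sphere_scale q) q.

Lemma sphere2_neq_hone w : sphere2 w -> w != hone.
Proof.
move=> Sw; apply/eqP => w1; move: Sw; rewrite w1 /sphere2 /= expr0n /= !addr0.
by move=> /eqP; rewrite eq_sym oner_eq0.
Qed.

Let sqr_disc q : disc q ^+ 2 = zsq q ^+ 2 + 4 * q.2 ^+ 2.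
Proof. by rewrite sqr_sqrtr //; have := sqr_ge0 (zsq q); have := sqr_ge0 q.2; lra. Qed.

Let disc_hdil l q : disc (hdil l q) = l ^+ 2 * disc q.
Proof. by rewrite /disc zsq_hdil /hdil /= -sqrtr_sqrM ?sqr_ge0 //; congr Num.sqrt; ring. Qed.

Let scale_den_gt0 q : q != hone -> 0 < zsq q + disc q.
Proof.
move=> q1; have z0 := zsq_ge0 q; have d0 : 0 <= disc q := sqrtr_ge0 _.
have [zq0|zq0] := eqVneq (zsq q) 0; last first.
  have : 0 < zsq q by rewrite lt0r zq0.
  by lra.
have [x0 y0] := zsq_eq0 zq0.
have t0 : q.2 != 0 by apply: contra_neq q1; case: q {z0 d0 zq0} x0 y0 => [[? ?] ?] /= -> -> ->.
by rewrite zq0 add0r /disc zq0 expr0n /= add0r sqrtr_gt0 mulr_gt0 // exprn_even_gt0.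
Qed.

Let sqr_sphere_scale q : q != hone -> sphere_scale q ^+ 2 = 2 / (zsq q + disc q).
Proof. by move=> q1; rewrite sqr_sqrtr // divr_ge0 // ltW // scale_den_gt0. Qed.

Lemma sphere_scale_gt0 q : q != hone -> 0 < sphere_scale q.
Proof. by move=> q1; rewrite sqrtr_gt0 divr_gt0 // scale_den_gt0. Qed.

Lemma sphere_proj_sphere2 q : q != hone -> sphere2 (sphere_proj q).
Proof.
move=> q1; rewrite /sphere2 /sphere_proj /hdil /=.
have den0 := scale_den_gt0 q1.
have -> : (sphere_scale q * q.1.1) ^+ 2 + (sphere_scale q * q.1.2) ^+ 2 +
    (sphere_scale q ^+ 2 * q.2) ^+ 2 =
  sphere_scale q ^+ 2 * zsq q + (sphere_scale q ^+ 2) ^+ 2 * q.2 ^+ 2 by rewrite /zsq; ring.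
rewrite sqr_sphere_scale //.
have key : 2 * zsq q * (zsq q + disc q) + 4 * q.2 ^+ 2 = (zsq q + disc q) ^+ 2.
  by rewrite sqrrD sqr_disc; ring.
have dn0 : zsq q + disc q != 0 by rewrite gt_eqF.
have -> : 2 / (zsq q + disc q) * zsq q + (2 / (zsq q + disc q)) ^+ 2 * q.2 ^+ 2 =
  (2 * zsq q * (zsq q + disc q) + 4 * q.2 ^+ 2) / (zsq q + disc q) ^+ 2 by field.
by rewrite key divff // expf_neq0.
Qed.

Lemma sphere_proj_hdil l q : 0 < l -> sphere_proj (hdil l q) = sphere_proj q.
Proof.
move=> l0; rewrite /sphere_proj hdil_comp; congr hdil.
rewrite /sphere_scale disc_hdil zsq_hdil -mulrDr.
have -> : 2 / (l ^+ 2 * (zsq q + disc q)) = l^-1 ^+ 2 * (2 / (zsq q + disc q)).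
  have [->|den0] := eqVneq (zsq q + disc q) 0; first by rewrite mulr0 !invr0 !mulr0.
  by field; rewrite den0 gt_eqF.
by rewrite sqrtr_sqrM ?invr_ge0 ?ltW // mulrC mulrA mulfV ?mul1r // gt_eqF.
Qed.

Lemma sphere_proj_id w : sphere2 w -> sphere_proj w = w.
Proof.
rewrite /sphere2 /sphere_proj /sphere_scale => Sw; have z0 := zsq_ge0 w.
have zt : zsq w + w.2 ^+ 2 = 1 by rewrite /zsq.
have -> : disc w = 2 - zsq w.
  have t2 : w.2 ^+ 2 = 1 - zsq w by lra.
  rewrite /disc t2.
  have -> : zsq w ^+ 2 + 4 * (1 - zsq w) = (2 - zsq w) ^+ 2 by ring.
  by rewrite sqrtr_sqr ger0_norm //; have := sqr_ge0 w.2; lra.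
by rewrite addrC subrK divff ?sqrtr1 ?hdil1.
Qed.

Lemma sphere_proj_continuous q : q != hone -> {for q, continuous sphere_proj}.
Proof.
move=> q1; apply: cvg_hdil; last exact: cvg_id.
apply: cvg_sqrt; apply: cvgM; first exact: cvg_cst.
apply: cvgV; first by rewrite gt_eqF // scale_den_gt0.
have [_ _ t_cont] := cvg_coord (F := nbhs q) (g := id) (p := q) cvg_id.
apply: cvgD; first exact: zsq_continuous.
by apply: cvg_sqrt; apply: cvgD; [apply: cvg_sqr; exact: zsq_continuous |
  apply: cvgM; [exact: cvg_cst | exact: cvg_sqr]].
Qed.

End SphereMaps.

Section SigmaSphere.
Variable R : realType.
Implicit Types (q w : hpt R) (r : R).
Local Notation N := (@kor_norm R).

Lemma Sigma_neq_hone r q : 0 < r -> Sigma r q -> q != hone.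
Proof.
move=> r0 [_]; rewrite -/(bdist q) => fq; apply/eqP => q1.
by move: fq; rewrite q1 bdist1; lra.
Qed.

Lemma Sigma_sigma_lift r w : 0 < r -> r < 1 -> w != hone -> Sigma r (sigma_lift r w).
Proof.
move=> r0 r1 w1; have Nu := kor_norm_normalize w1.
have [/andP [s0 s1] fs] := sigma_radiusP r0 r1 Nu.
by split => //; rewrite /kball /= kor_norm_hdil ?Nu ?mulr1 // ltW.
Qed.

Lemma sigma_lift_sphere_proj r q : 0 < r -> r < 1 -> Sigma r q ->
  sigma_lift r (sphere_proj q) = q.
Proof.
move=> r0 r1 Sq; have q1 := Sigma_neq_hone r0 Sq.
have [Nq1 fq] := Sq; rewrite -/(bdist q) in fq.
rewrite /sigma_lift /sphere_proj kor_normalize_hdil ?sphere_scale_gt0 //.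
rewrite (@sigma_radius_eq _ _ _ (N q)) ?hdil_kor_normalize //.
- exact: kor_norm_normalize.
- by rewrite kor_norm_gt0.
Qed.

Lemma sphere_proj_sigma_lift r w : 0 < r -> r < 1 -> sphere2 w ->
  sphere_proj (sigma_lift r w) = w.
Proof.
move=> r0 r1 Sw; have w1 := sphere2_neq_hone Sw.
have [/andP [s0 _] _] := sigma_radiusP r0 r1 (kor_norm_normalize w1).
rewrite /sigma_lift sphere_proj_hdil // /kor_normalize sphere_proj_hdil ?sphere_proj_id //.
by rewrite invr_gt0 kor_norm_gt0.
Qed.

End SigmaSphere.

Unset Implicit Arguments.

Theorem proposition6p7 (R : realType) (r : R) (hr0 : 0 < r) (hr1 : r < 1) :
  homeomorphic (Sigma r) (@sphere2 R).
Proof.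
exists (@sphere_proj R), (sigma_lift r); split; first split.
- by move=> q /(Sigma_neq_hone hr0); exact: sphere_proj_sphere2.
- by move=> w /sphere2_neq_hone; exact: Sigma_sigma_lift.
- by move=> q; exact: sigma_lift_sphere_proj.
- by move=> w; exact: sphere_proj_sigma_lift.
split; apply: continuous_in_subspaceT => p; rewrite inE.
- by move=> /(Sigma_neq_hone hr0); exact: sphere_proj_continuous.
- by move=> /sphere2_neq_hone; exact: sigma_lift_continuous.
Qed.
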